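(* Let $(X,d_X)$, $(Y,d_Y)$ and $(X\times Y,d)$ be ultrametric spaces, where $d$ is partial distance-preserving and $d_\infty\le d$ on $(X\times Y)\times(X\times Y)$. Then for all compact sets $W\subseteq X$, $Z\subseteq Y$ and every $\varepsilon>0$, $$\mathcal M_\varepsilon(W\times Z)=\mathcal M_\varepsilon(W)\cdot\mathcal M_\varepsilon(Z),\qquad \mathcal N_\varepsilon(W\times Z)=\mathcal N_\varepsilon(W)\cdot\mathcal N_\varepsilon(Z),\qquad \mathcal M_\varepsilon(W\times Z)=\mathcal N_\varepsilon(W\times Z),$$ where the quantities for $W$, $Z$, $W\times Z$ are computed in $(X,d_X)$, $(Y,d_Y)$, $(X\times Y,d)$ respectively.
   Context: $d_\infty((x_1,y_1),(x_2,y_2))=\max\{d_X(x_1,x_2),d_Y(y_1,y_2)\}$. A metric $d$ on $X\times Y$ is partial distance-preserving if $d((x_1,y),(x_2,y))=d_X(x_1,x_2)$ and $d((x,y_1),(x,y_2))=d_Y(y_1,y_2)$ for all $x,x_1,x_2\in X$, $y,y_1,y_2\in Y$. Ultrametric: $\rho(a,b)\le\max\{\rho(a,c),\rho(c,b)\}$. In a metric space $(M,\rho)$ with closed balls $B(c,r)=\{x:\rho(x,c)\le r\}$: $C$ is an $\varepsilon$-net for $V$ if $V\subseteq\bigcup_{c\in C}B(c,\varepsilon)$; $A$ is $\varepsilon$-distinguishable if $\rho(a,b)>\varepsilon$ for distinct $a,b\in A$. For totally bounded $V$, the covering number $\mathcal N_\varepsilon(V)$ is the smallest cardinality of a subset of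 $V$ that is an $\varepsilon$-net for $V$, and the packing number $\mathcal M_\varepsilon(V)$ is the maximal cardinality of an $\varepsilon$-distinguishable subset of $V$. *)

From Stdlib Require Import Reals List.
Import ListNotations.
Open Scope R_scope.

Set Implicit Arguments.

Definition is_metric (T : Type) (d : T -> T -> R) : Prop :=
  (forall x y, 0 <= d x y) /\
  (forall x y, d x y = 0 <-> x = y) /\
  (forall x y, d x y = d y x) /\
  (forall x y z, d x z <= d x y + d y z).

Definition is_ultrametric (T : Type) (d : T -> T -> R) : Prop :=
  is_metric d /\ (forall a b c, d a b <= Rmax (d a c) (d c b)).

Definition cball (T : Type) (d : T -> T -> R) (c : T) (r : R) : T -> Prop :=
  fun x => d x c <= r.

Definition is_open (T : Type) (d : T -> T -> R) (U : T -> Prop) : Prop :=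
  forall x, U x -> exists r, 0 < r /\ forall y, d x y < r -> U y.

Definition is_compact (T : Type) (d : T -> T -> R) (V : T -> Prop) : Prop :=
  forall (I : Type) (U : I -> T -> Prop),
    (forall i, is_open d (U i)) ->
    (forall x, V x -> exists i, U i x) ->
    exists l : list I, forall x, V x -> exists i, In i l /\ U i x.

Definition fin_subset (T : Type) (V : T -> Prop) (C : list T) : Prop :=
  NoDup C /\ (forall c, In c C -> V c).

Definition is_net (T : Type) (d : T -> T -> R) (eps : R) (V : T -> Prop)
  (C : list T) : Prop :=
  forall x, V x -> exists c, In c C /\ cball d c eps x.

Definition distinguishable (T : Type) (d : T -> T -> R) (eps : R)
  (A : list T) : Prop :=
  forall a b, In a A -> In b A -> a <> b -> eps < d a b.

(* n is the covering number N_eps(V): the smallest cardinality of a subset of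
   V that is an eps-net for V (a minimum is attained by a finite subset, so it
   suffices to compare with finite subsets). *)
Definition is_covering_number (T : Type) (d : T -> T -> R) (eps : R)
  (V : T -> Prop) (n : nat) : Prop :=
  (exists C, fin_subset V C /\ is_net d eps V C /\ length C = n) /\
  (forall C, fin_subset V C -> is_net d eps V C -> (n <= length C)%nat).

(* n is the packing number M_eps(V): the maximal cardinality of an
   eps-distinguishable subset of V (every finite such subset has at most n
   elements, hence no infinite one exists). *)
Definition is_packing_number (T : Type) (d : T -> T -> R) (eps : R)
  (V : T -> Prop) (n : nat) : Prop :=
  (exists A, fin_subset V A /\ distinguishable d eps A /\ length A = n) /\
  (forall A, fin_subset V A -> distinguishable d eps A -> (length A <= n)%nat).

Definition setX (X Y : Type) (W : X -> Prop) (Z : Y -> Prop) : X * Y -> Prop :=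
  fun p => W (fst p) /\ Z (snd p).

Definition partial_distance_preserving (X Y : Type) (dX : X -> X -> R)
  (dY : Y -> Y -> R) (d : X * Y -> X * Y -> R) : Prop :=
  (forall x1 x2 y, d (x1, y) (x2, y) = dX x1 x2) /\
  (forall x y1 y2, d (x, y1) (x, y2) = dY y1 y2).

Definition d_inf (X Y : Type) (dX : X -> X -> R) (dY : Y -> Y -> R)
  (p q : X * Y) : R :=
  Rmax (dX (fst p) (fst q)) (dY (snd p) (snd q)).

From Stdlib Require Import Reals List Lra Lia Classical.
Import ListNotations.
Open Scope R_scope.

Set Implicit Arguments.

(* Call a finite subset C of V an eps-skeleton of V if it is at
   once an eps-net for V and eps-distinguishable.  In an ultrametric space two
   points of an eps-distinguishable set never lie in a common closed eps-ball,
   so every eps-distinguishable subset of V injects into every eps-net of V by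
   "nearest net point".  Hence a skeleton C is simultaneously a maximal packing
   and a minimal net: M_eps(V) = N_eps(V) = |C|.  The theorem follows since the
   product list has |C_W| * |C_Z| elements. *)

Lemma length_le_of_injective_rel {A B : Type} (rel : A -> B -> Prop)
  (l : list A) : forall m : list B,
  NoDup l -> (forall a, In a l -> exists b, In b m /\ rel a b) ->
  (forall a a' b, In a l -> In a' l -> rel a b -> rel a' b -> a = a') ->
  (length l <= length m)%nat.
Proof.
  induction l as [|a l IH]; intros m hnd htot hinj; simpl; [lia|].
  inversion hnd as [|? ? ha_notin hnd_l]; subst.
  destruct (htot a (or_introl eq_refl)) as [b [hb hab]].
  destruct (in_split _ _ hb) as [m1 [m2 ->]].
  assert (hrest : (length l <= length (m1 ++ m2))%nat).
  { apply IH; auto.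
    - intros a' ha'. destruct (htot a' (or_intror ha')) as [b' [hb' hab']].
      exists b'. split; auto.
      apply in_app_or in hb'. destruct hb' as [h|[h|h]]; try (apply in_or_app; auto).
      (* [b] is already used by [a], so [b' = b] would force [a' = a]. *)
      subst b'. exfalso.
      assert (a = a') by (apply (hinj a a' b); simpl; auto).
      subst; contradiction.
    - intros; eapply hinj; simpl; eauto. }
  rewrite !length_app in *. simpl. lia.
Qed.

Lemma NoDup_list_prod {A B : Type} (l : list A) (m : list B) :
  NoDup l -> NoDup m -> NoDup (list_prod l m).
Proof.
  intros hl hm. induction hl as [|a l ha_notin hl IH]; simpl; [constructor|].
  apply NoDup_app; auto.
  - apply NoDup_map_NoDup_ForallPairs; auto.
    intros x y _ _ h. inversion h; auto.
  - intros p hp hp'. apply in_map_iff in hp. destruct hp as [b [<- _]].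
    apply in_prod_iff in hp'. tauto.
Qed.

Definition skeleton (T : Type) (d : T -> T -> R) (eps : R) (V : T -> Prop)
  (C : list T) : Prop :=
  fin_subset V C /\ is_net d eps V C /\ distinguishable d eps C.

Section UltrametricSpace.
Variable T : Type.
Variable d : T -> T -> R.
Hypothesis hu : is_ultrametric d.

Lemma ultra_sym a b : d a b = d b a.
Proof. destruct hu as [[_ [_ [h _]]] _]. apply h. Qed.

Lemma ultra_refl a : d a a = 0.
Proof. destruct hu as [[_ [h _]] _]. apply h. reflexivity. Qed.

Lemma ultra_le r a b c : d a c <= r -> d c b <= r -> d a b <= r.
Proof.
  intros h1 h2. destruct hu as [_ h]. eapply Rle_trans; [apply (h a b c)|].
  apply Rmax_lub; assumption.
Qed.

Lemma cball_open c r : 0 < r -> is_open d (cball d c r).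
Proof.
  intros hr y hy. exists r. split; auto. intros z hz.
  unfold cball in *. eapply ultra_le; [|exact hy]. rewrite ultra_sym. lra.
Qed.

Variable eps : R.

Lemma distinguishable_same_ball (A : list T) a a' c :
  distinguishable d eps A -> In a A -> In a' A ->
  d a c <= eps -> d a' c <= eps -> a = a'.
Proof.
  intros hA ha ha' hac ha'c. apply NNPP; intro hne.
  assert (d a a' <= eps) by (eapply ultra_le; eauto; rewrite ultra_sym; auto).
  specialize (hA a a' ha ha' hne). lra.
Qed.

Lemma distinguishable_le_net (V : T -> Prop) (A C : list T) :
  fin_subset V A -> distinguishable d eps A -> is_net d eps V C ->
  (length A <= length C)%nat.
Proof.
  intros [hnd hAV] hA hC.
  apply (length_le_of_injective_rel (fun a c => d a c <= eps)).
  - exact hnd.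
  - intros a ha. exact (hC a (hAV a ha)).
  - intros a a' c ha ha' hac ha'c.
    exact (distinguishable_same_ball hA ha ha' hac ha'c).
Qed.

Lemma skeleton_numbers (V : T -> Prop) (C : list T) : skeleton d eps V C ->
  is_packing_number d eps V (length C) /\ is_covering_number d eps V (length C).
Proof.
  intros [hf [hnet hdis]]. split; split.
  - exists C; auto.
  - intros A hA hdisA. exact (distinguishable_le_net hA hdisA hnet).
  - exists C; auto.
  - intros C' _ hnet'. exact (distinguishable_le_net hf hdis hnet').
Qed.

Lemma greedy_thinning (L : list T) : 0 <= eps -> exists C,
  (forall c, In c C -> In c L) /\ NoDup C /\ distinguishable d eps C /\
  (forall x, In x L -> exists c, In c C /\ d x c <= eps).
Proof.
  intros heps. induction L as [|a L IH].
  - exists []. repeat split; simpl; try tauto; [apply NoDup_nil|intros a b []].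
  - destruct IH as [C [hsub [hnd [hdis hcov]]]].
    destruct (classic (exists c, In c C /\ d a c <= eps)) as [[c [hc hac]]|hfar].
    +
      exists C. repeat split; auto.
      * intros; simpl; auto.
      * intros x [->|hx]; eauto.
    +
      assert (hfar' : forall c, In c C -> eps < d a c).
      { intros c hc. destruct (Rlt_or_le eps (d a c)) as [h|h]; auto.
        exfalso; apply hfar; eauto. }
      exists (a :: C). repeat split.
      * intros c [->|hc]; simpl; auto.
      * apply NoDup_cons; [|exact hnd]. intro hin. apply hfar. exists a.
        rewrite ultra_refl. split; [exact hin|lra].
      * intros x y [->|hx] [->|hy] hne; try congruence; auto.
        rewrite ultra_sym. auto.
      * intros x [->|hx].
        -- exists x. rewrite ultra_refl. simpl. split; auto; lra.
        -- destruct (hcov x hx) as [c [hc hxc]]. exists c; simpl; auto.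
Qed.

(* A compact set has a finite eps-net made of its own points, obtained from a
   finite subcover of the open cover by closed eps-balls. *)
Lemma compact_finite_net (V : T -> Prop) : 0 < eps -> is_compact d V ->
  exists L, (forall c, In c L -> V c) /\ is_net d eps V L.
Proof.
  intros heps hcpt.
  destruct (hcpt {x | V x} (fun i => cball d (proj1_sig i) eps)) as [l hl].
  - intros i. apply cball_open; auto.
  - intros x hx. exists (exist _ x hx). unfold cball; simpl.
    rewrite ultra_refl; lra.
  - exists (map (@proj1_sig _ _) l). split.
    + intros c hc. apply in_map_iff in hc. destruct hc as [[x hx] [<- _]]; auto.
    + intros x hx. destruct (hl x hx) as [i [hi hxi]].
      exists (proj1_sig i). split; auto. apply in_map; auto.
Qed.

Lemma compact_skeleton (V : T -> Prop) : 0 < eps -> is_compact d V ->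
  exists C, skeleton d eps V C.
Proof.
  intros heps hcpt.
  destruct (compact_finite_net heps hcpt) as [L [hLV hLnet]].
  destruct (greedy_thinning L (Rlt_le _ _ heps)) as [C [hsub [hnd [hdis hcov]]]].
  exists C. repeat split; auto.
  intros x hx. destruct (hLnet x hx) as [y [hy hxy]].
  destruct (hcov y hy) as [c [hc hyc]].
  exists c. split; auto. unfold cball in *. eapply ultra_le; eauto.
Qed.
End UltrametricSpace.

Arguments ultra_le {T d} hu r a b c.

Section Product.
Variables (X Y : Type) (dX : X -> X -> R) (dY : Y -> Y -> R).
Variable d : X * Y -> X * Y -> R.
Hypothesis hd : is_ultrametric d.
Hypothesis hpdp : partial_distance_preserving dX dY d.
Hypothesis hinf : forall p q, d_inf dX dY p q <= d p q.
Variable eps : R.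
Variables (W : X -> Prop) (Z : Y -> Prop) (CW : list X) (CZ : list Y).

(* Products of eps-nets are eps-nets: move along one coordinate at a time,
   each move costing at most eps, and combine with the strong triangle
   inequality. *)
Lemma product_net : is_net dX eps W CW -> is_net dY eps Z CZ ->
  is_net d eps (setX W Z) (list_prod CW CZ).
Proof.
  intros hnW hnZ [x y] [hx hy]. simpl in hx, hy.
  destruct (hnW x hx) as [cx [hcx hdx]]. destruct (hnZ y hy) as [cy [hcy hdy]].
  exists (cx, cy). split; [apply in_prod; auto|].
  unfold cball in *. destruct hpdp as [hXpart hYpart].
  apply (ultra_le hd eps _ _ (cx, y)); [rewrite hXpart|rewrite hYpart]; auto.
Qed.

(* Products of eps-distinguishable sets are eps-distinguishable, because d
   dominates the sup-metric and distinct pairs differ in some coordinate. *)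
Lemma product_distinguishable :
  distinguishable dX eps CW -> distinguishable dY eps CZ ->
  distinguishable d eps (list_prod CW CZ).
Proof.
  intros hdW hdZ [a1 b1] [a2 b2] h1 h2 hne.
  apply in_prod_iff in h1. apply in_prod_iff in h2.
  eapply Rlt_le_trans; [|apply hinf]. unfold d_inf; simpl.
  destruct (classic (a1 = a2)) as [->|ha].
  - assert (b1 <> b2) by congruence.
    eapply Rlt_le_trans; [apply (hdZ b1 b2); tauto|apply Rmax_r].
  - eapply Rlt_le_trans; [apply (hdW a1 a2); tauto|apply Rmax_l].
Qed.

Lemma product_skeleton : skeleton dX eps W CW -> skeleton dY eps Z CZ ->
  skeleton d eps (setX W Z) (list_prod CW CZ).
Proof.
  intros [[hndW hW] [hnW hdW]] [[hndZ hZ] [hnZ hdZ]].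
  split; [split|split].
  - apply NoDup_list_prod; auto.
  - intros [x y] h. apply in_prod_iff in h. split; simpl; [apply hW|apply hZ]; tauto.
  - apply product_net; auto.
  - apply product_distinguishable; auto.
Qed.
End Product.

Theorem lemma4p2 (X Y : Type) (dX : X -> X -> R) (dY : Y -> Y -> R)
  (d : X * Y -> X * Y -> R)
  (hX : is_ultrametric dX) (hY : is_ultrametric dY) (hd : is_ultrametric d)
  (hpdp : partial_distance_preserving dX dY d)
  (hinf : forall p q, d_inf dX dY p q <= d p q)
  (W : X -> Prop) (Z : Y -> Prop)
  (hW : is_compact dX W) (hZ : is_compact dY Z)
  (eps : R) (heps : 0 < eps) :
  exists mW mZ nW nZ : nat,
    is_packing_number dX eps W mW /\ is_packing_number dY eps Z mZ /\
    is_covering_number dX eps W nW /\ is_covering_number dY eps Z nZ /\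
    is_packing_number d eps (setX W Z) (mW * mZ) /\
    is_covering_number d eps (setX W Z) (nW * nZ) /\
    (mW * mZ = nW * nZ)%nat.
Proof.
  destruct (compact_skeleton hX heps hW) as [CW sW].
  destruct (compact_skeleton hY heps hZ) as [CZ sZ].
  pose proof (product_skeleton hd hpdp hinf sW sZ) as sWZ.
  destruct (skeleton_numbers hX sW) as [pW cW].
  destruct (skeleton_numbers hY sZ) as [pZ cZ].
  destruct (skeleton_numbers hd sWZ) as [pWZ cWZ].
  rewrite length_prod in pWZ, cWZ.
  exists (length CW), (length CZ), (length CW), (length CZ).
  repeat split; auto; solve [apply pW | apply pZ | apply cW | apply cZ
                            | apply pWZ | apply cWZ].
Qed.
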